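(* Let $R$ and $S$ be commutative rings with identity, $f:R\to S$ a ring homomorphism, and $J$ a nonzero proper ideal of $S$. Then $R\bowtie^f J$ is a pm-ring if and only if $R$ is a pm-ring and, for every prime ideal $\mathfrak{q}$ of $S$ with $J\not\subseteq\mathfrak{q}$, the following equality holds: $$\big\lvert \big(\operatorname{Max}(S)\cap V(\mathfrak{q})\big)\setminus V(J)\big\rvert + \big\lvert \operatorname{Max}(R)\cap V\big(f^{-1}(\mathfrak{q}+J)\big)\big\rvert = 1.$$
   Context: The amalgamation of $R$ with $S$ along $J$ with respect to $f$ is the subring $R\bowtie^f J:=\{(r,f(r)+j)\mid r\in R,\ j\in J\}$ of $R\times S$. A commutative ring is a pm-ring if every prime ideal is contained in a unique maximal ideal. For a commutative ring $A$ and an ideal $I$ of $A$, $\operatorname{Max}(A)$ denotes the set of maximal ideals of $A$ and $V(I)$ the set of prime ideals of $A$ containing $I$ (so $V(R)=\emptyset$). *)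

From HB Require Import structures.
From mathcomp Require Import all_boot all_algebra.
From mathcomp Require Import boolp classical_sets cardinality.
From mathcomp Require Import ring.
Set Implicit Arguments. Unset Strict Implicit. Unset Printing Implicit Defensive.
Import GRing.Theory.
Local Open Scope ring_scope.
Local Open Scope classical_set_scope.
Local Open Scope card_scope.

Definition is_ideal (T : comNzRingType) (I : set T) : Prop :=
  [/\ I 0, (forall x y, I x -> I y -> I (x - y)) & (forall a x, I x -> I (a * x))].

Definition proper_ideal (T : comNzRingType) (I : set T) : Prop :=
  is_ideal I /\ ~ I 1.

Definition prime_ideal (T : comNzRingType) (P : set T) : Prop :=
  proper_ideal P /\ (forall x y, P (x * y) -> P x \/ P y).

Definition maximal_ideal (T : comNzRingType) (M : set T) : Prop :=
  proper_ideal M /\ (forall K : set T, is_ideal K -> M `<=` K -> K = M \/ K = setT).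

Definition Max (T : comNzRingType) : set (set T) := [set M | maximal_ideal M].
Definition V (T : comNzRingType) (I : set T) : set (set T) :=
  [set P | prime_ideal P /\ I `<=` P].

Definition pm_ring (T : comNzRingType) : Prop :=
  forall P : set T, prime_ideal P -> exists! M : set T, maximal_ideal M /\ P `<=` M.

Definition ideal_sum (T : comNzRingType) (I K : set T) : set T :=
  [set x | exists a b, I a /\ K b /\ x = a + b].

Definition card_is (T : Type) (A : set T) (n : nat) : Prop := A #= `I_n.

(* Amalgamation R ⋈^f J := {(r, f r + j) | r in R, j in J} ⊆ R × S *)
Record ideal_of (S : comNzRingType) := IdealOf {
  ideal_set :> set S; ideal_ax : is_ideal ideal_set }.

Section Amalgamation.
Variables (R S : comNzRingType) (f : {rmorphism R -> S}) (J : ideal_of S).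

Definition amalg_pred : pred (R * S)%type := fun x => `[< ideal_set J (x.2 - f x.1) >].

Lemma amalg_subring_closed : subring_closed amalg_pred.
Proof.
have [J0 JB JM] := ideal_ax J.
have JN : forall y, ideal_set J y -> ideal_set J (- y) by move=> y Jy; rewrite -sub0r; exact: JB.
have JD : forall x y, ideal_set J x -> ideal_set J y -> ideal_set J (x + y).
  by move=> x y Jx Jy; rewrite -(opprK y); apply: JB => //; exact: JN.
split.
- by rewrite unfold_in; apply/asboolP; rewrite /= rmorph1 subrr.
- move=> [a b] [c d]; rewrite !unfold_in => /asboolP /= H1 /asboolP /= H2.
  apply/asboolP => /=.
  have -> : b - d - f (a - c) = (b - f a) - (d - f c).
    by rewrite rmorphB /=; ring.
  exact: JB.
- move=> [a b] [c d]; rewrite !unfold_in => /asboolP /= H1 /asboolP /= H2.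
  apply/asboolP => /=.
  have -> : b * d - f (a * c) = b * (d - f c) + f c * (b - f a).
    by rewrite rmorphM /=; ring.
  by apply: JD; apply: JM.
Qed.

HB.instance Definition _ := GRing.isSubringClosed.Build (R * S)%type amalg_pred
  amalg_subring_closed.

Record amalg := Amalg { amalg_val :> (R * S)%type; _ : amalg_pred amalg_val }.

HB.instance Definition _ := [isSub for amalg_val].
HB.instance Definition _ := [Choice of amalg by <:].
HB.instance Definition _ := [SubChoice_isSubComNzRing of amalg by <:].

End Amalgamation.

Notation "R '⋈[' f ']' J" := (@amalg R _ f J) (at level 40, f at level 0).

From Pilot Require Import Defs.
From HB Require Import structures.
From mathcomp Require Import all_boot all_algebra.
From mathcomp Require Import boolp classical_sets cardinality.
From mathcomp Require Import ring.
Set Implicit Arguments.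
Unset Strict Implicit.
Import GRing.Theory.
Local Open Scope ring_scope.
Local Open Scope classical_set_scope.

(* Write A for R ⋈^f J, with its projections amalg_fst : A -> R, onto with
   kernel 0 × J, and amalg_snd : A -> S. A prime of A containing 0 × J is the
   preimage of a prime p of R. A prime P missing some e = (0, j) is the
   preimage of the prime q = {s | (0, s j) ∈ P} of S, because x e depends only
   on amalg_snd x; moreover j ∉ q. Maximal ideals split the same way, and
   inclusions are preserved: above amalg_fst^-1(p) lie exactly the
   amalg_fst^-1(m) with m ⊇ p maximal; above amalg_snd^-1(q) lie the
   amalg_snd^-1(Q) with Q ⊇ q maximal and J ⊄ Q, and the amalg_fst^-1(m) with
   m ⊇ f^-1(q + J) maximal. Hence a prime of the first kind lies under a unique
   maximal ideal iff p does, and one of the second kind iff the two counts add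
   up to 1. *)

Lemma ex1_image (T U : Type) (h : T -> U) (X : set T) :
  (forall x y, X x -> X y -> h x = h y -> x = y) ->
  (exists! u, (h @` X) u) <-> (exists! x, X x).
Proof.
move=> h_inj; split=> [[_ [[x Xx <-] uniq_hx]] | [x [Xx uniq_x]]].
  by exists x; split=> // y Xy; apply: h_inj => //; apply: uniq_hx; exists y.
by exists (h x); split=> [|_ [y Xy <-]]; [exists x | rewrite (uniq_x y)].
Qed.

Lemma ex1_setU (T : Type) (X Y : set T) : X `&` Y = set0 ->
  (exists! t, (X `|` Y) t) <->
  ((exists! t, X t) /\ Y = set0) \/ (X = set0 /\ (exists! t, Y t)).
Proof.
move=> XY0; have XYN t : X t -> Y t -> False.
  by move=> Xt Yt; have : (X `&` Y) t by []; rewrite XY0.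
split=> [[t [XYt uniq_t]] | [[[t [Xt uniq_t]] Y0] | [X0 [t [Yt uniq_t]]]]].
- have uniqX s : X s -> t = s by move=> Xs; apply: uniq_t; left.
  have uniqY s : Y s -> t = s by move=> Ys; apply: uniq_t; right.
  case: XYt => [Xt | Yt]; [left | right]; split.
  + by exists t.
  + by apply/seteqP; split=> // s Ys; apply: (XYN s) => //; rewrite -(uniqY s).
  + by apply/seteqP; split=> // s Xs; apply: (XYN s) => //; rewrite -(uniqX s).
  + by exists t.
- by exists t; split=> [|s [Xs | ]]; [left | apply: uniq_t | rewrite Y0].
- by exists t; split=> [|s [ | Ys]]; [right | rewrite X0 | apply: uniq_t].
Qed.

Lemma ex1_setU_image (T1 T2 U : Type) (h1 : T1 -> U) (h2 : T2 -> U)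
    (X : set T1) (Y : set T2) :
  (forall x x', X x -> X x' -> h1 x = h1 x' -> x = x') ->
  (forall y y', Y y -> Y y' -> h2 y = h2 y' -> y = y') ->
  (forall x y, X x -> Y y -> h1 x <> h2 y) ->
  (exists! u, (h1 @` X `|` h2 @` Y) u) <->
  ((exists! x, X x) /\ Y = set0) \/ (X = set0 /\ (exists! y, Y y)).
Proof.
move=> h1_inj h2_inj h12; rewrite ex1_setU; last first.
  by apply/seteqP; split=> // _ [[x Xx <-] [y Yy /esym]]; apply: h12.
have image_eq0 V (h : V -> U) A : (h @` A = set0) = (A = set0).
  by apply/propext; split=> [/image_set0_set0 | ->]; rewrite ?image_set0.
by rewrite !image_eq0 (ex1_image h1_inj) (ex1_image h2_inj).
Qed.

Lemma card_is0 T (X : set T) : card_is X 0 = (X = set0).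
Proof. by rewrite /card_is II0 card_eq0; apply/propext; split=> /eqP. Qed.

Lemma card_is1 T (X : set T) : card_is X 1 = exists! x, X x.
Proof.
apply/propext; split=> [/card_set_bijP [g [g_fun g_inj g_surj]] | [a [Xa uniq_a]]].
  have [a Xa _] : (g @` X) 0%N by apply: g_surj.
  exists a; split=> // b Xb; apply: g_inj; rewrite ?inE //.
  by move: (g_fun _ Xa) (g_fun _ Xb); rewrite /= !ltnS !leqn0 => /eqP -> /eqP ->.
suff -> : X = [set a] by exact: card_set1.
by apply/seteqP; split=> [b /uniq_a <- | _ ->].
Qed.

Lemma card_is_add_eq1 T U (X : set T) (Y : set U) :
  (exists n m, card_is X n /\ card_is Y m /\ (n + m)%N = 1%N) <->
  ((exists! x, X x) /\ Y = set0) \/ (X = set0 /\ (exists! y, Y y)).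
Proof.
rewrite -!card_is0 -!card_is1; split=> [[[|[|n]] [[|[|m]] [Xn [Ym //]]]] | ].
- by right.
- by left.
by case=> -[Xn Ym]; [exists 1%N, 0%N | exists 0%N, 1%N].
Qed.

Section Ideals.
Variable T : comNzRingType.
Implicit Types (I M P : set T) (a x y : T).

Lemma ideal0 I : is_ideal I -> I 0.
Proof. by case. Qed.

Lemma idealB I x y : is_ideal I -> I x -> I y -> I (x - y).
Proof. by case=> _ + _; apply. Qed.

Lemma idealMl I a x : is_ideal I -> I x -> I (a * x).
Proof. by case=> _ _; apply. Qed.

Lemma idealMr I a x : is_ideal I -> I x -> I (x * a).
Proof. by rewrite mulrC; apply: idealMl. Qed.

Lemma idealN I x : is_ideal I -> I x -> I (- x).
Proof. by move=> idI Ix; rewrite -sub0r; apply: idealB => //; apply: ideal0. Qed.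

Lemma idealD I x y : is_ideal I -> I x -> I y -> I (x + y).
Proof.
by move=> idI Ix Iy; rewrite -(opprK y); apply: idealB => //; apply: idealN.
Qed.

Lemma ideal_setT I : is_ideal I -> I 1 -> I = setT.
Proof.
by move=> idI I1; apply/seteqP; split=> // x _; rewrite -(mulr1 x); apply: idealMl.
Qed.

Lemma maximal_idealP M : maximal_ideal M <->
  Defs.proper_ideal M /\ (forall z, ~ M z -> exists a, M (1 - a * z)).
Proof.
split=> [[[idM M1] maxM] | [[idM M1] invM]].
  split=> // z Mz.
  pose K := [set x | exists a m, M m /\ x = m + a * z].
  have idK : is_ideal K.
    split; first by exists 0, 0; split; [apply: ideal0 | ring].
      move=> _ _ [a [m [Mm ->]]] [b [n [Mn ->]]].
      by exists (a - b), (m - n); split; [apply: idealB | ring].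
    move=> c _ [a [m [Mm ->]]].
    by exists (c * a), (c * m); split; [apply: idealMl | ring].
  have MK : M `<=` K by move=> m Mm; exists 0, m; split=> //; ring.
  have [KM | KT] := maxM K idK MK.
    by exfalso; apply: Mz; rewrite -KM; exists 1, 0; split; [apply: ideal0 | ring].
  have [a [m [Mm e1]]] : K 1 by rewrite KT.
  by exists a; rewrite e1 addrK.
split=> // K idK MK; have [[z [Kz Mz]] | KM] := pselect (exists z, K z /\ ~ M z).
  right; apply: ideal_setT => //; have [a Ma] := invM z Mz.
  by rewrite -(subrK (a * z) 1); apply: idealD => //; [apply: MK | apply: idealMl].
left; apply/seteqP; split=> // x Kx; apply: contrapT => Mx.
by apply: KM; exists x.
Qed.

Lemma maximal_prime M : maximal_ideal M -> prime_ideal M.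
Proof.
move=> /maximal_idealP [[idM M1] invM]; split=> // x y Mxy.
have [|Mx] := pselect (M x); first by left.
have [|My] := pselect (M y); first by right.
have [[a Ma] [b Mb]] := (invM x Mx, invM y My).
exfalso; apply: M1.
have -> : 1 = (1 - a * x) + a * x * (1 - b * y) + (a * b) * (x * y) by ring.
by apply: idealD => //; [apply: idealD => //|]; apply: idealMl.
Qed.

Lemma maximal_notV M I : maximal_ideal M -> ~ V I M -> ~ I `<=` M.
Proof. by move=> /maximal_prime primeM VIM IM; apply: VIM. Qed.

End Ideals.

Section Morphisms.
Variables (T U : comNzRingType) (g : {rmorphism T -> U}).
Implicit Types (I M P : set T) (K Q : set U).

Lemma preim_ideal K : is_ideal K -> is_ideal (g @^-1` K).
Proof.
move=> idK; split=> [|x y|a x] /=; rewrite ?rmorph0 ?rmorphB ?rmorphM.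
- exact: ideal0.
- exact: idealB.
- exact: idealMl.
Qed.

Lemma preim_prime Q : prime_ideal Q -> prime_ideal (g @^-1` Q).
Proof.
move=> [[idQ Q1] primeQ]; split; first split.
- exact: preim_ideal.
- by rewrite /= rmorph1.
- by move=> x y; rewrite /= rmorphM => /primeQ.
Qed.

Lemma preim_image_ker I : is_ideal I -> g @^-1` [set 0] `<=` I ->
  g @^-1` (g @` I) = I.
Proof.
move=> idI kerI; apply/seteqP; split=> [x [y Iy gyx] | x Ix]; last by exists x.
rewrite -(subKr y x); apply: idealB => //; apply: kerI.
by rewrite /= rmorphB gyx subrr.
Qed.

Section Surjective.
Hypothesis g_surj : forall u, exists t, g t = u.

Lemma preim_maximal Q : maximal_ideal Q -> maximal_ideal (g @^-1` Q).
Proof.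
move=> /maximal_idealP [[idQ Q1] invQ]; apply/maximal_idealP; split; first split.
- exact: preim_ideal.
- by rewrite /= rmorph1.
- move=> z /invQ [a Qa]; have [b gb] := g_surj a.
  by exists b; rewrite /= rmorphB rmorph1 rmorphM gb.
Qed.

Lemma image_ideal I : is_ideal I -> is_ideal (g @` I).
Proof.
move=> idI; split.
- by exists 0; [apply: ideal0 | apply: rmorph0].
- move=> _ _ [x Ix <-] [y Iy <-].
  by exists (x - y); [apply: idealB | apply: rmorphB].
- move=> a _ [x Ix <-]; have [b <-] := g_surj a.
  by exists (b * x); [apply: idealMl | apply: rmorphM].
Qed.

Lemma image_maximal M : maximal_ideal M -> g @^-1` [set 0] `<=` M ->
  maximal_ideal (g @` M).
Proof.
move=> /maximal_idealP [[idM M1] invM] kerM; have ME := preim_image_ker idM kerM.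
apply/maximal_idealP; split; first split.
- exact: image_ideal.
- by move=> gM1; apply: M1; rewrite -ME /= rmorph1.
- move=> u; have [z <-] := g_surj u => gMz.
  have [|a Ma] := invM z; first by move=> Mz; apply: gMz; exists z.
  by exists (g a); exists (1 - a * z) => //; rewrite rmorphB rmorph1 rmorphM.
Qed.

Lemma image_prime P : prime_ideal P -> g @^-1` [set 0] `<=` P ->
  prime_ideal (g @` P).
Proof.
move=> [[idP P1] primeP] kerP; have PE := preim_image_ker idP kerP.
split; first split.
- exact: image_ideal.
- by move=> gP1; apply: P1; rewrite -PE /= rmorph1.
- move=> u v; have [[x <-] [y <-]] := (g_surj u, g_surj v).
  rewrite -rmorphM => gPxy; have /primeP [Px | Py] : P (x * y) by rewrite -PE.
  + by left; exists x.
  + by right; exists y.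
Qed.

Lemma preimage_inj : injective (preimage g).
Proof.
have gT : g @` setT = setT.
  by apply/seteqP; split=> // u _; have [t <-] := g_surj u; exists t.
by move=> K K' eKK'; rewrite -(image_preimage K gT) eKK' image_preimage.
Qed.

Lemma maximal_over_preim K : is_ideal K ->
  [set M | maximal_ideal M /\ g @^-1` K `<=` M] =
  preimage g @` [set Q | maximal_ideal Q /\ K `<=` Q].
Proof.
move=> idK; apply/seteqP; split=> [M [maxM KM] | _ [Q [maxQ KQ] <-]].
- have kerM : g @^-1` [set 0] `<=` M.
    by move=> x /= gx0; apply: KM; rewrite /= gx0; apply: ideal0.
  exists (g @` M); last exact: preim_image_ker (maxM.1.1) kerM.
  split; first exact: image_maximal.
  by move=> u Ku; have [x gx] := g_surj u; exists x => //; apply: KM; rewrite /= gx.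
- by split; [apply: preim_maximal | move=> x /KQ].
Qed.

Lemma ex1_maximal_over_preim K : is_ideal K ->
  (exists! M, maximal_ideal M /\ g @^-1` K `<=` M) <->
  (exists! Q, maximal_ideal Q /\ K `<=` Q).
Proof.
move=> idK; rewrite -(@ex1_image _ _ (preimage g)); first by rewrite -maximal_over_preim.
by move=> Q Q' _ _ /preimage_inj.
Qed.

End Surjective.

Section GeneratorInImage.
Variable e : T.
Hypothesis mul_ge_in_image : forall u, exists t, g t = u * g e.

Lemma preim_maximal_avoiding Q : maximal_ideal Q -> ~ Q (g e) ->
  maximal_ideal (g @^-1` Q).
Proof.
move=> maxQ Qe; have [[idQ Q1] primeQ] := maximal_prime maxQ.
move/maximal_idealP: maxQ => [_ invQ]; apply/maximal_idealP; split; first split.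
- exact: preim_ideal.
- by rewrite /= rmorph1.
- move=> z /= Qz; have [|a Qa] := invQ (g z * g e); first by case/primeQ.
  have [b gb] := mul_ge_in_image a; exists b.
  by rewrite /= rmorphB rmorph1 rmorphM gb -mulrA (mulrC (g e)).
Qed.

Lemma maximal_of_preim Q : prime_ideal Q -> ~ Q (g e) ->
  maximal_ideal (g @^-1` Q) -> maximal_ideal Q.
Proof.
move=> [[idQ Q1] primeQ] Qe /maximal_idealP [_ invQ].
apply/maximal_idealP; split=> // z Qz; have [y gy] := mul_ge_in_image z.
have [|b Qb] := invQ y; first by rewrite /= gy => /primeQ [].
by exists (g b * g e); move: Qb; rewrite /= rmorphB rmorph1 rmorphM gy mulrAC mulrA.
Qed.

Lemma preim_subset K Q : is_ideal K -> prime_ideal Q -> ~ Q (g e) ->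
  g @^-1` K `<=` g @^-1` Q -> K `<=` Q.
Proof.
move=> idK [_ primeQ] Qe KQ u Ku; have [t gt] := mul_ge_in_image u.
have /primeQ [] // : Q (u * g e).
by rewrite -gt; apply: KQ; rewrite /= gt; apply: idealMr.
Qed.

Hypothesis mul_e_fiber : forall x y, g x = g y -> x * e = y * e.

Lemma prime_saturated P : prime_ideal P -> ~ P e ->
  forall x y, g x = g y -> P x -> P y.
Proof.
move=> [[idP _] primeP] Pe x y gxy Px.
by have /primeP [] // : P (y * e) by rewrite -(mul_e_fiber gxy); apply: idealMr.
Qed.

Lemma prime_eq_preim P : prime_ideal P -> ~ P e ->
  exists2 Q, prime_ideal Q & ~ Q (g e) /\ P = g @^-1` Q.
Proof.
move=> primeP Pe; have [[idP P1] mulP] := primeP.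
have satP := prime_saturated primeP Pe.
have Pmule x : P (x * e) = P x.
  by apply/propext; split=> [/mulP [] | Px]; last exact: idealMr.
pose Q := [set u | exists2 x, P x & g x = u * g e].
have QP u t : g t = u * g e -> Q u = P t.
  move=> gt; apply/propext; split=> [[x Px gx] | Pt]; last by exists t.
  by apply: satP Px; rewrite gt.
have PQ x : P x = Q (g x) by rewrite (QP _ (x * e)) ?rmorphM.
have Pmul u v tu tv t : g tu = u * g e -> g tv = v * g e -> g t = u * v * g e ->
    P t = P (tu * tv).
  move=> gtu gtv gt; rewrite -Pmule; apply/propext; split; apply: satP;
    by rewrite !rmorphM gt gtu gtv; ring.
exists Q; last split.
- split; first split; first split.
  + by exists 0; [apply: ideal0 | rewrite rmorph0 mul0r].
  + move=> u v; have [[tu gtu] [tv gtv]] := (mul_ge_in_image u, mul_ge_in_image v).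
    rewrite (QP _ _ gtu) (QP _ _ gtv) (QP (u - v) (tu - tv)); first exact: idealB.
    by rewrite rmorphB gtu gtv mulrBl.
  + move=> a u; have [[ta gta] [tu gtu]] := (mul_ge_in_image a, mul_ge_in_image u).
    have [t gt] := mul_ge_in_image (a * u).
    by rewrite (QP _ _ gtu) (QP _ _ gt) (Pmul _ _ _ _ _ gta gtu gt); apply: idealMl.
  + by rewrite (QP 1 e) ?mul1r.
  + move=> u v; have [[tu gtu] [tv gtv]] := (mul_ge_in_image u, mul_ge_in_image v).
    have [t gt] := mul_ge_in_image (u * v).
    rewrite (QP _ _ gtu) (QP _ _ gtv) (QP _ _ gt) (Pmul _ _ _ _ _ gtu gtv gt).
    exact: mulP.
- by rewrite -PQ.
- by apply/funext => x; rewrite PQ.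
Qed.

End GeneratorInImage.
End Morphisms.

Section Amalgamation.
Variables (R S : comNzRingType) (f : {rmorphism R -> S}) (J : ideal_of S).
Local Notation A := (amalg f J).

Definition amalg_fst : {rmorphism A -> R} := fst \o val.
Definition amalg_snd : {rmorphism A -> S} := snd \o val.

Let idJ : is_ideal J := ideal_ax J.

Lemma amalg_mem x : ideal_set J (amalg_snd x - f (amalg_fst x)).
Proof. by have /asboolP := valP x. Qed.

Lemma amalg_exists r s : ideal_set J (s - f r) ->
  exists x : A, amalg_fst x = r /\ amalg_snd x = s.
Proof. by move=> Jsr; exists (Amalg (asboolT Jsr : amalg_pred f J (r, s))). Qed.

Lemma amalg_eq x y :
  amalg_fst x = amalg_fst y -> amalg_snd x = amalg_snd y -> x = y.
Proof. by move=> e1 e2; apply/val_inj/injective_projections. Qed.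

Lemma amalg_fst_surj r : exists x : A, amalg_fst x = r.
Proof.
have [|x [xr _]] := @amalg_exists r (f r); last by exists x.
by rewrite subrr; apply: ideal0.
Qed.

Lemma amalg_ker_snd e : amalg_fst e = 0 -> ideal_set J (amalg_snd e).
Proof. by move=> e0; have := amalg_mem e; rewrite e0 rmorph0 subr0. Qed.

Lemma amalg_ker_avoid Q : ~ J `<=` Q ->
  exists e : A, amalg_fst e = 0 /\ ~ Q (amalg_snd e).
Proof.
move=> /nonsubset [j [Jj Qj]].
have [|e [e0 ej]] := @amalg_exists 0 j; last by exists e; rewrite ej.
by rewrite rmorph0 subr0.
Qed.

Section KernelElement.
Variable e : A.
Hypothesis e0 : amalg_fst e = 0.

Lemma amalg_ker_mul_in_image s : exists x, amalg_snd x = s * amalg_snd e.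
Proof.
have [|x [_ xs]] := @amalg_exists 0 (s * amalg_snd e); last by exists x.
by rewrite rmorph0 subr0; apply: idealMl; last apply: amalg_ker_snd.
Qed.

Lemma amalg_ker_mul_fiber x y : amalg_snd x = amalg_snd y -> x * e = y * e.
Proof. by move=> xy; apply: amalg_eq; rewrite !rmorphM ?e0 ?mulr0 ?xy. Qed.

End KernelElement.

Lemma preim_snd_maximal Q : maximal_ideal Q -> ~ J `<=` Q ->
  maximal_ideal (amalg_snd @^-1` Q).
Proof.
move=> maxQ /amalg_ker_avoid [e [e0 Qe]].
exact: (preim_maximal_avoiding (amalg_ker_mul_in_image e0) maxQ Qe).
Qed.

Lemma maximal_of_preim_snd Q : prime_ideal Q -> ~ J `<=` Q ->
  maximal_ideal (amalg_snd @^-1` Q) -> maximal_ideal Q.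
Proof.
move=> primeQ /amalg_ker_avoid [e [e0 Qe]].
exact: (maximal_of_preim (amalg_ker_mul_in_image e0) primeQ Qe).
Qed.

Lemma preim_snd_subset K Q : is_ideal K -> prime_ideal Q -> ~ J `<=` Q ->
  amalg_snd @^-1` K `<=` amalg_snd @^-1` Q -> K `<=` Q.
Proof.
move=> idK primeQ /amalg_ker_avoid [e [e0 Qe]].
exact: (preim_subset (amalg_ker_mul_in_image e0) idK primeQ Qe).
Qed.

Lemma preim_fst_neq_preim_snd m Q : is_ideal m -> ~ J `<=` Q ->
  amalg_fst @^-1` m <> amalg_snd @^-1` Q.
Proof.
move=> idm /amalg_ker_avoid [e [e0 Qe]] emQ; apply: Qe.
have : (amalg_fst @^-1` m) e by change (m (amalg_fst e)); rewrite e0; apply: ideal0.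
by rewrite emQ.
Qed.

Lemma preim_snd_sub_preim_fst K m :
  amalg_snd @^-1` K `<=` amalg_fst @^-1` m <-> f @^-1` ideal_sum K J `<=` m.
Proof.
split=> [Km r [a [b [Ka [Jb fr]]]] | Km x Kx].
- have [|x [<- xa]] := @amalg_exists r a.
    by rewrite fr opprD addNKr; apply: idealN.
  by apply: Km; change (K (amalg_snd x)); rewrite xa.
- apply: Km; exists (amalg_snd x), (f (amalg_fst x) - amalg_snd x).
  split=> //; split; last by rewrite addrC subrK.
  by rewrite -opprB; apply: idealN => //; apply: amalg_mem.
Qed.

Lemma amalg_prime_cases P : prime_ideal P ->
  amalg_fst @^-1` [set 0] `<=` P \/
  exists2 Q, prime_ideal Q & ~ J `<=` Q /\ P = amalg_snd @^-1` Q.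
Proof.
move=> primeP.
have [|/nonsubset [e [e0 Pe]]] := pselect (amalg_fst @^-1` [set 0] `<=` P).
  by left.
have [Q primeQ [Qe ->]] :=
  prime_eq_preim (amalg_ker_mul_in_image e0) (amalg_ker_mul_fiber e0) primeP Pe.
by right; exists Q => //; split=> // JQ; apply/Qe/JQ/amalg_ker_snd.
Qed.

Lemma maximal_over_preim_snd q : prime_ideal q -> ~ J `<=` q ->
  [set M | maximal_ideal M /\ amalg_snd @^-1` q `<=` M] =
  preimage amalg_snd @` ((@Max S `&` V q) `\` V J) `|`
  preimage amalg_fst @` (@Max R `&` V (f @^-1` ideal_sum q J)).
Proof.
move=> primeq Jq; apply/seteqP; split=> [M [maxM qM] | M].
- have [kerM | [Q primeQ [JQ eM]]] := amalg_prime_cases (maximal_prime maxM).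
  + have ME := preim_image_ker maxM.1.1 kerM.
    have maxm := image_maximal amalg_fst_surj maxM kerM.
    right; exists (amalg_fst @` M) => //; split=> //; split; first exact: maximal_prime.
    by apply/preim_snd_sub_preim_fst; rewrite ME.
  + have maxQ : maximal_ideal Q by apply: maximal_of_preim_snd; rewrite -?eM.
    left; exists Q => //; split; last by case.
    split=> //; split=> //; apply: preim_snd_subset primeq.1.1 primeQ JQ _.
    by rewrite -eM.
case=> [[Q [[maxQ [_ qQ]] JQ] <-] | [m [maxm [_ qJm]] <-]].
- by split; [apply: preim_snd_maximal (maximal_notV maxQ JQ) | move=> x /qQ].
- by split; [exact: (preim_maximal amalg_fst_surj maxm) | apply/preim_snd_sub_preim_fst].
Qed.

Lemma ex1_maximal_over_preim_snd q : prime_ideal q -> ~ J `<=` q ->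
  (exists! M, maximal_ideal M /\ amalg_snd @^-1` q `<=` M) <->
  exists n m, card_is ((@Max S `&` V q) `\` V J) n /\
    card_is (@Max R `&` V (f @^-1` ideal_sum q J)) m /\ (n + m)%N = 1%N.
Proof.
move=> primeq Jq; rewrite card_is_add_eq1.
rewrite -(@ex1_setU_image _ _ _ (preimage amalg_snd) (preimage amalg_fst)).
- by rewrite -maximal_over_preim_snd.
- move=> Q Q' [[maxQ [primeQ _]] /(maximal_notV maxQ) JQ].
  move=> [[maxQ' [primeQ' _]] /(maximal_notV maxQ') JQ'] eQQ'.
  by apply/seteqP; split; apply: preim_snd_subset => //;
    [exact: primeQ.1.1 | rewrite eQQ' | exact: primeQ'.1.1 | rewrite eQQ'].
- by move=> m m' _ _ /(preimage_inj amalg_fst_surj).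
- move=> Q m [[maxQ _] /(maximal_notV maxQ) JQ] [[[idm _] _] _] /esym.
  exact: preim_fst_neq_preim_snd.
Qed.

End Amalgamation.

Theorem theorem3p4 (R S : comNzRingType) (f : {rmorphism R -> S}) (J : ideal_of S)
  (J_nonzero : exists x, ideal_set J x /\ x <> 0) (J_proper : ~ ideal_set J 1) :
  pm_ring (amalg f J) <->
  (pm_ring R /\
   forall q : set S, prime_ideal q -> ~ (ideal_set J `<=` q) ->
     exists n m : nat,
       card_is ((@Max S `&` V q) `\` V (ideal_set J)) n /\
       card_is (@Max R `&` V (f @^-1` ideal_sum q J)) m /\
       (n + m)%N = 1%N).
Proof.
have fst_surj := amalg_fst_surj f J.
split=> [pmA | [pmR pm_snd] P primeP].
  split=> [p primep | q primeq Jq].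
    apply/(ex1_maximal_over_preim fst_surj primep.1.1).
    exact/pmA/preim_prime.
  by apply/(ex1_maximal_over_preim_snd f primeq Jq)/pmA/preim_prime.
have [kerP | [q primeq [Jq ->]]] := amalg_prime_cases primeP.
  rewrite -(preim_image_ker primeP.1.1 kerP).
  apply/(ex1_maximal_over_preim fst_surj (image_ideal fst_surj primeP.1.1)).
  exact/pmR/(image_prime fst_surj).
exact/(ex1_maximal_over_preim_snd f primeq Jq)/pm_snd.
Qed.
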